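(* Let $Z$ be a metric space, $I=[0,1]$, and $H:I\times I\to Z$ a function such that $H|_{I\times\{0,1\}}$ is continuous. Let $\{(a_i,b_i)\}_i$ be a collection of pairwise disjoint open intervals in $I$ such that $\operatorname{diam}\bigl(H([a_i,b_i]\times I)\bigr)\to0$. Suppose that $H$ is constant on $\{t\}\times I$ for every $t\notin\bigcup_i(a_i,b_i)$, and that $H$ is continuous on each $[a_i,b_i]\times I$. Then $H$ is continuous. *)

From HB Require Import structures.
From mathcomp Require Import all_boot all_order all_algebra.
From mathcomp Require Import all_classical all_reals all_analysis.
Set Implicit Arguments. Unset Strict Implicit. Unset Printing Implicit Defensive.
Import Order.TTheory GRing.Theory Num.Theory.
Import numFieldNormedType.Exports.
Local Open Scope classical_set_scope.
Local Open Scope ring_scope.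

(** Diameter of a subset of a metric space, as an extended real:
    sup of the distances between pairs of its points (-oo for the empty set). *)
Definition diam {R : realType} {Z : metricType R} (A : set Z) : \bar R :=
  ereal_sup [set (mdist x y)%:E | x in A & y in A].

From HB Require Import structures.
From mathcomp Require Import all_boot all_order all_algebra.
From mathcomp Require Import all_classical all_reals all_analysis.
Import Order.TTheory GRing.Theory Num.Theory.
Import numFieldNormedType.Exports.
Local Open Scope classical_set_scope.
Local Open Scope ring_scope.

(** Continuity at [(t, s)] is clear when [t] lies in some [(a_i, b_i)].
    Otherwise [H(t, .)] is constant, equal to [H(t, 0)].  Given [e > 0], only
    finitely many strips have diameter [>= e/2]; near [(t, s)] each of them is
    handled by continuity on the strip (or is avoided, when [t] is outside the
    closed interval).  A nearby point [(x, y)] in a small strip is within [e/2]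
    of [(x, 0)], which is within [e/2] of [(t, 0)] by continuity on the bottom
    edge; a point [(x, y)] outside all strips has [H(x, y) = H(x, 0)]. *)

Lemma filter_forall_finite {J T : Type} {A : set J} {F : set_system T}
  {P : J -> T -> Prop} :
  Filter F -> finite_set A -> (forall i, A i -> F (P i)) ->
  F (fun x => forall i, A i -> P i x).
Proof.
move=> FF /(@finite_seqP {classic J}) [s ->].
elim: s => [|i s IHs] FP; first by apply: filterE => x j.
have Pi : F (P i) by apply: FP; rewrite /= inE eqxx.
have Ps : F (fun x => forall j, [set` s] j -> P j x).
  by apply: IHs => j js; apply: FP; rewrite /= inE js orbT.
apply: filterS2 Pi Ps => x Pix Psx j.
by rewrite /= inE => /orP[/eqP->//|/Psx].
Qed.

Lemma near_fst {T U : topologicalType} {t : T} (s : U) {P : T -> Prop} :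
  (\forall x \near t, P x) -> \forall p \near (t, s), P p.1.
Proof. exact: cvg_fst. Qed.

Lemma near_pair_snd {T U : topologicalType} {t : T} {s : U}
  {P : T * U -> Prop} :
  (\forall p \near (t, s), P p) -> \forall x \near t, P (x, s).
Proof.
by apply: (@cvg_pair _ _ _ (nbhs t)); [exact: cvg_id | exact: cvg_cst].
Qed.

Lemma mdist_le_diam {R : realType} {Z : metricType R} {A : set Z} {x y : Z} :
  A x -> A y -> ((mdist x y)%:E <= diam A)%E.
Proof. by move=> Ax Ay; apply: ereal_sup_ubound; exists x => //; exists y. Qed.

Lemma near_within_mdist_lt {T : topologicalType} {R : realType}
  {Z : metricType R} {f : T -> Z} {B : set T} (x : T) {e : R} :
  {within B, continuous f} -> B x -> 0 < e ->
  \forall y \near x, B y -> mdist (f x) (f y) < e.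
Proof.
move=> /subspace_continuousP fB Bx e0.
have /metricType_numDomainType.cvgrPdist_lt/(_ e e0) := fB x Bx.
by rewrite near_withinE.
Qed.

Section Glueing.
Context {R : realType} {Z : metricType R} {H : R * R -> Z}.

Lemma near_strip_mdist_lt {a b : R} (t : R) {s e : R} :
  {within `[a, b] `*` `[0, 1], continuous H} -> s \in `[0, 1] -> 0 < e ->
  \forall p \near (t, s),
    p.1 \in `]a, b[ -> p.2 \in `[0, 1] -> mdist (H (t, s)) (H p) < e.
Proof.
move=> Hab Is e0; have [tab|tNab] := boolP (t \in `[a, b]).
  have := near_within_mdist_lt (t, s) Hab (conj tab Is) e0.
  apply: filterS => -[x y] /= + xab Iy.
  by apply; split=> //; exact: subset_itv_oo_cc.
have : \forall x \near t, (~` `[a, b]) x.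
  by apply: open_nbhs_nbhs; split; [exact/closed_openC/itv_closed | exact/negP].
move/(near_fst s); apply: filterS => -[x y] /= xNab xab.
by exfalso; apply: xNab; exact: subset_itv_oo_cc.
Qed.

Lemma near_interior_mdist_lt {a b t s e : R} :
  {within `[a, b] `*` `[0, 1], continuous H} -> t \in `]a, b[ ->
  s \in `[0, 1] -> 0 < e ->
  \forall p \near (t, s), (`[0, 1] `*` `[0, 1]) p -> mdist (H (t, s)) (H p) < e.
Proof.
move=> Hab tab Is e0.
have near_tab := near_fst s (near_in_itvoo tab).
apply: filterS2 (near_strip_mdist_lt t Hab Is e0) near_tab.
by move=> p + p1ab [_ Ip2]; apply.
Qed.

Lemma near_bottom_edge_mdist_lt {t e : R} :
  {within `[0, 1] `*` [set 0; 1], continuous H} -> t \in `[0, 1] -> 0 < e ->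
  \forall x \near t, x \in `[0, 1] -> mdist (H (t, 0)) (H (x, 0)) < e.
Proof.
move=> Hedge It e0.
have := near_within_mdist_lt (t, 0) Hedge (conj It (or_introl erefl)) e0.
by move/near_pair_snd; apply: filterS => x + Ix; apply; split=> //; left.
Qed.

Context {J : Type} {a b : J -> R}.
Let strip i : set (R * R) := `[a i, b i] `*` `[0, 1].

Hypothesis H_edge : {within `[0, 1] `*` [set 0; 1], continuous H}.
Hypothesis small_strips : forall e : R, 0 < e ->
  finite_set [set i | (e%:E <= diam (H @` strip i))%E].
Hypothesis H_const_off_strips : forall t, t \in `[0, 1] ->
  ~ (exists i, t \in `]a i, b i[) ->
  forall s s', s \in `[0, 1] -> s' \in `[0, 1] -> H (t, s) = H (t, s').
Hypothesis H_strip : forall i, {within strip i, continuous H}.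

Lemma near_gap_mdist_lt {t s e : R} :
  t \in `[0, 1] -> s \in `[0, 1] -> ~ (exists i, t \in `]a i, b i[) -> 0 < e ->
  \forall p \near (t, s), (`[0, 1] `*` `[0, 1]) p -> mdist (H (t, s)) (H p) < e.
Proof.
move=> It Is tgap e0; have e2 : 0 < e / 2 by rewrite divr_gt0.
have I0 : (0 : R) \in `[0, 1] by rewrite in_itv /= lexx ler01.
pose big := [set i | ((e / 2)%:E <= diam (H @` strip i))%E].
have near_big : \forall p \near (t, s), forall i, big i ->
    p.1 \in `]a i, b i[ -> p.2 \in `[0, 1] -> mdist (H (t, s)) (H p) < e.
  apply: filter_forall_finite => [|i _]; first exact: small_strips.
  exact: (near_strip_mdist_lt t (H_strip i) Is e0).
have near_edge := near_fst s (near_bottom_edge_mdist_lt H_edge It e2).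
have Hts : H (t, s) = H (t, 0) := H_const_off_strips t It tgap s 0 Is I0.
apply: filterS2 near_big near_edge => -[x y] /= xbig xedge [Ix Iy].
have [[j xj]|xgap] := pselect (exists j, x \in `]a j, b j[); last first.
  rewrite Hts (H_const_off_strips x Ix xgap y 0 Iy I0).
  by apply: lt_trans (xedge Ix) _; rewrite ltr_pdivrMr // ltr_pMr // ltr1n.
have [bigj|smallj] := pselect (big j); first exact: (xbig j bigj xj Iy).
rewrite Hts.
apply: le_lt_trans (metric_triangle _ (H (x, 0)) _) _.
rewrite [e]splitr ltrD ?xedge// -lte_fin.
have xj' : x \in `[a j, b j] by exact: subset_itv_oo_cc.
have diam_j : (diam (H @` strip j) < (e / 2)%:E)%E by rewrite ltNge; apply/negP.
apply: le_lt_trans (mdist_le_diam _ _) diam_j.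
  by exists (x, 0).
by exists (x, y).
Qed.

End Glueing.

Theorem lemma2p7 (R : realType) (Z : metricType R) (H : R * R -> Z)
  (J : Type) (a b : J -> R) :
  {within (`[0, 1] `*` [set 0; 1]) : set (R * R), continuous H} ->
  (forall i, 0 <= a i /\ a i < b i /\ b i <= 1) ->
  (forall i j, i <> j -> `]a i, b i[ `&` `]a j, b j[ = set0) ->
  (forall e : R, 0 < e ->
     finite_set [set i | (e%:E <= diam (H @` (`[a i, b i] `*` `[0%R, 1%R])))%E]) ->
  (forall t, t \in `[0, 1] -> ~ (exists i, t \in `]a i, b i[) ->
     forall s s', s \in `[0, 1] -> s' \in `[0, 1] -> H (t, s) = H (t, s')) ->
  (forall i, {within (`[a i, b i] `*` `[0, 1]) : set (R * R), continuous H}) ->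
  {within (`[0, 1] `*` `[0, 1]) : set (R * R), continuous H}.
Proof.
move=> H_edge _ _ small_strips H_const H_strip.
apply/subspace_continuousP => -[t s] [/= It Is].
apply/metricType_numDomainType.cvgrPdist_lt => e e0; rewrite near_withinE.
have [[i ti]|tgap] := pselect (exists i, t \in `]a i, b i[).
  exact: (near_interior_mdist_lt (H_strip i) ti Is e0).
exact: (near_gap_mdist_lt H_edge small_strips H_const H_strip It Is tgap e0).
Qed.
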